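(* Let $Q=\{0,1,\dots,n-1\}$ and alphabet $\{a,b\}$, and define three DFAs on $Q$, all with $b$ acting by $i\mapsto i+1$ for $0\le i\le n-2$ and $n-1\mapsto 0$: (1) the Černý automaton $\mathscr{C}_n$ ($n\ge 2$): $a$ fixes $i$ for $0\le i\le n-2$ and sends $n-1\mapsto 0$; (2) $\mathscr{L}_n$ ($n\ge 3$): $a$ sends $i\mapsto i+1$ for $0\le i\le n-4$, $n-3\mapsto n-1$, $n-2\mapsto 0$, $n-1\mapsto 0$; (3) $\mathscr{V}_n$ ($n\ge 2$): $a$ sends $i\mapsto i+1$ for $0\le i\le n-3$, $n-2\mapsto 0$, $n-1\mapsto 0$. Then $rc(Syn(\mathscr{C}_n))=rc(Syn(\mathscr{L}_n))=rc(Syn(\mathscr{V}_n))=n$.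
   Context: A DFA $\langle Q,\Sigma,\delta\rangle$ has a total transition function $\delta:Q\times\Sigma\to Q$ extended to words; it is synchronizing if some word $w$ satisfies $\delta(q,w)=\delta(q',w)$ for all $q,q'\in Q$, and $Syn(\mathscr{A})$ denotes the set of all such words. A language $L$ is ideal if $L=\Sigma^*L\Sigma^*$ (each $Syn(\mathscr{A})$ is ideal). The reset complexity $rc(L)$ of an ideal language $L$ is the minimal number of states of a synchronizing DFA $\mathscr{B}$ with $Syn(\mathscr{B})=L$. *)

From mathcomp Require Import all_boot.
Set Implicit Arguments. Unset Strict Implicit. Unset Printing Implicit Defensive.

Inductive letter := La | Lb.

(* A DFA over {a,b} with state set Q (a finite type) is a total transition
   function d : Q -> letter -> Q; extended to words (left to right). *)
Definition run (Q : Type) (d : Q -> letter -> Q) (q : Q) (w : seq letter) : Q :=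
  foldl d q w.

Definition syn (Q : finType) (d : Q -> letter -> Q) (w : seq letter) : bool :=
  [forall q : Q, forall q' : Q, run d q w == run d q' w].

Definition synchronizing (Q : finType) (d : Q -> letter -> Q) : Prop :=
  exists w, syn d w.

Definition is_rc (L : seq letter -> bool) (n : nat) : Prop :=
  (exists (Q : finType) (d : Q -> letter -> Q),
      #|Q| = n /\ synchronizing d /\ forall w, syn d w = L w)
  /\ (forall (Q : finType) (d : Q -> letter -> Q),
      synchronizing d -> (forall w, syn d w = L w) -> n <= #|Q|).

(* k mod n as an element of 'I_n (n > 0 is witnessed by i : 'I_n). *)
Definition modI (n : nat) (i : 'I_n) (k : nat) : 'I_n :=
  Ordinal (ltn_pmod k (leq_ltn_trans (leq0n i) (ltn_ord i))).

Definition bmap (n : nat) (i : 'I_n) : 'I_n := modI i i.+1.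

Definition cerny (n : nat) (i : 'I_n) (x : letter) : 'I_n :=
  match x with
  | La => if i.+1 < n then i else modI i 0
  | Lb => bmap i
  end.

Definition autL (n : nat) (i : 'I_n) (x : letter) : 'I_n :=
  match x with
  | La => if i.+3 < n then modI i i.+1
          else if i.+3 == n then modI i n.-1
          else modI i 0
  | Lb => bmap i
  end.

Definition autV (n : nat) (i : 'I_n) (x : letter) : 'I_n :=
  match x with
  | La => if i.+2 < n then modI i i.+1 else modI i 0
  | Lb => bmap i
  end.

From mathcomp Require Import all_boot.
From mathcomp Require Import zify.
Set Implicit Arguments. Unset Strict Implicit. Unset Printing Implicit Defensive.

(* Each automaton has a word v acting on states as a "shift towards one end"
   (i |-> i - 1, or i |-> min (i + 1) (n - 1)), so that v^(n-1) is
   synchronizing but v^(n-2) is not.  Conversely, in any DFA whose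
   synchronizing words include v^(k+1) but not v^k, the images of the state
   set under the iterates of v strictly shrink k + 1 times before becoming a
   singleton, so the DFA has at least k + 2 states. *)

Section IterImage.
Variables (Q : finType) (f : Q -> Q).

Definition iter_image t : {set Q} := [set iter t f q | q in Q].

Lemma iter_imageS t : iter_image t.+1 = f @: iter_image t.
Proof. by rewrite /iter_image -imset_comp; apply: eq_imset. Qed.

Lemma iter_imageS_sub t : iter_image t.+1 \subset iter_image t.
Proof. by apply/subsetP=> _ /imsetP[q _ ->]; rewrite iterSr imset_f. Qed.

Lemma iter_image_stable t s :
  iter_image t.+1 = iter_image t -> iter_image (s + t) = iter_image t.
Proof. by move=> E; elim: s => // s IH; rewrite addSn iter_imageS IH -iter_imageS E. Qed.

Lemma card_iter_image_strict k :
  (forall t, t < k -> iter_image t.+1 != iter_image t) ->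
  #|iter_image k| + k <= #|Q|.
Proof.
elim: k => [_|k IH strict]; first by rewrite addn0 max_card.
have lt_k : #|iter_image k.+1| < #|iter_image k|.
  by rewrite proper_card // properEneq iter_imageS_sub strict.
rewrite addnS; apply: leq_trans (IH _); first by rewrite ltn_add2r.
by move=> t lt_tk; apply: strict; rewrite ltnS ltnW.
Qed.

Lemma iter_sync_card k q0 q1 :
  (forall q q', iter k.+1 f q = iter k.+1 f q') ->
  iter k f q0 != iter k f q1 -> k.+2 <= #|Q|.
Proof.
move=> sync nsync.
have card_k1 : #|iter_image k.+1| <= 1.
  rewrite -(cards1 (iter k.+1 f q0)); apply/subset_leq_card/subsetP.
  by move=> _ /imsetP[q _ ->]; rewrite inE (sync q q0).
have card_k : 1 < #|iter_image k|.
  have := cards2 (iter k f q0) (iter k f q1); rewrite nsync => <-.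
  apply/subset_leq_card/subsetP.
  by move=> x; rewrite !inE => /orP[] /eqP->; apply: imset_f.
have neq_k : iter_image k.+1 != iter_image k.
  by apply: contraTneq card_k => <-; rewrite -leqNgt.
have strict t : t < k.+1 -> iter_image t.+1 != iter_image t.
  move=> lt_tk; apply: contra neq_k => /eqP E; apply/eqP.
  by rewrite ltnS in lt_tk; rewrite -(subnK lt_tk) -addSn !iter_image_stable.
have nonempty : 0 < #|iter_image k.+1|.
  by rewrite card_gt0; apply/set0Pn; exists (iter k.+1 f q0); apply: imset_f.
by have := card_iter_image_strict strict; lia.
Qed.

End IterImage.

Lemma run_cons (Q : Type) (d : Q -> letter -> Q) q x w :
  run d q (x :: w) = run d (d q x) w.
Proof. by []. Qed.

Lemma run_cat (Q : Type) (d : Q -> letter -> Q) q w1 w2 :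
  run d q (w1 ++ w2) = run d (run d q w1) w2.
Proof. exact: foldl_cat. Qed.

Lemma run_rcons (Q : Type) (d : Q -> letter -> Q) q w x :
  run d q (rcons w x) = d (run d q w) x.
Proof. exact: foldl_rcons. Qed.

Definition vpow (v : seq letter) (t : nat) : seq letter := flatten (nseq t v).

Lemma run_vpow (Q : Type) (d : Q -> letter -> Q) v t q :
  run d q (vpow v t) = iter t (run d ^~ v) q.
Proof. by elim: t q => // t IH q; rewrite iterSr -IH run_cat. Qed.

Lemma syn_vpow_card (Q : finType) (d : Q -> letter -> Q) v k :
  syn d (vpow v k.+1) -> ~~ syn d (vpow v k) -> k.+2 <= #|Q|.
Proof.
move=> /forallP sync; rewrite negb_forall => /existsP[q0].
rewrite negb_forall => /existsP[q1]; rewrite !run_vpow.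
apply: iter_sync_card => q q'; rewrite -!run_vpow.
by apply/eqP; move/forallP: (sync q); apply.
Qed.

Lemma is_rc_vpow (Q : finType) (d : Q -> letter -> Q) v k :
  #|Q| = k.+2 -> syn d (vpow v k.+1) -> ~~ syn d (vpow v k) ->
  is_rc (syn d) k.+2.
Proof.
move=> cardQ sync nsync; split; first by exists Q, d; do !split=> //; exists (vpow v k.+1).
by move=> Q' d' _ synE; apply: (@syn_vpow_card _ d' v); rewrite !synE.
Qed.

Section OrdinalStates.
Variables (n : nat) (d : 'I_n -> letter -> 'I_n).

Lemma syn_ordE w (h : nat -> nat) :
  (forall q, (run d q w : nat) = h q) ->
  syn d w = [forall i : 'I_n, forall j : 'I_n, h i == h j].
Proof.
by move=> hw; apply: eq_forallb => i; apply: eq_forallb => j; rewrite -!hw (inj_eq val_inj).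
Qed.

Lemma val_run_vpow v (g : nat -> nat) :
  (forall q, (run d q v : nat) = g q) ->
  forall t q, (run d q (vpow v t) : nat) = iter t g q.
Proof. by move=> hv t q; rewrite run_vpow; elim: t => //= t <-; apply: hv. Qed.

Lemma val_run_bmap : (forall q, d q Lb = bmap q) ->
  forall k q, (run d q (nseq k Lb) : nat) = (q + k) %% n.
Proof.
move=> db; elim=> [|k IH] q; first by rewrite addn0 modn_small.
by rewrite run_cons IH db /= modnDml addSnnS.
Qed.

End OrdinalStates.

Lemma is_rc_ord_iter m (d : 'I_m.+2 -> letter -> 'I_m.+2) v (g : nat -> nat) :
  (forall q, (run d q v : nat) = g q) ->
  (forall i j, i < m.+2 -> j < m.+2 -> iter m.+1 g i = iter m.+1 g j) ->
  iter m g 0 != iter m g m.+1 -> is_rc (syn d) m.+2.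
Proof.
move=> hv sync nsync; apply: (is_rc_vpow (v := v)); first exact: card_ord.
  rewrite (syn_ordE (val_run_vpow hv m.+1)).
  by apply/forallP=> i; apply/forallP=> j; rewrite (sync i j).
rewrite (syn_ordE (val_run_vpow hv m)).
by apply: contraNN nsync => /forallP/(_ ord0)/forallP/(_ ord_max).
Qed.

Lemma is_rc_ord_pred m (d : 'I_m.+2 -> letter -> 'I_m.+2) v :
  (forall q, (run d q v : nat) = q.-1) -> is_rc (syn d) m.+2.
Proof.
move=> hv; apply: (is_rc_ord_iter hv) => [i j lti ltj|]; rewrite !iter_predn.
  by move: lti ltj; rewrite !ltnS -!subn_eq0 => /eqP-> /eqP->.
by rewrite sub0n subSnn.
Qed.

Lemma iter_succ_minn k t i :
  i <= k -> iter t (fun j => minn j.+1 k) i = minn (i + t) k.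
Proof. by move=> le_ik; elim: t => [|t /= ->] /=; lia. Qed.

Lemma is_rc_ord_succ m (d : 'I_m.+2 -> letter -> 'I_m.+2) v :
  (forall q, (run d q v : nat) = minn q.+1 m.+1) -> is_rc (syn d) m.+2.
Proof.
move=> hv; apply: (is_rc_ord_iter (g := fun j => minn j.+1 m.+1) hv) => [i j lti ltj|];
  by rewrite !iter_succ_minn; lia.
Qed.

Lemma val_cerny_a n (p : 'I_n) : (cerny p La : nat) = if p.+1 < n then p : nat else 0.
Proof. by rewrite /=; case: ifP => //= _; apply: mod0n. Qed.

Lemma val_autV_a n (p : 'I_n) : (autV p La : nat) = if p.+2 < n then p.+1 else 0.
Proof. by rewrite /=; case: ifP => /= [lt|_]; [apply: modn_small; apply: ltnW | apply: mod0n]. Qed.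

Lemma val_autL_a_lt n (p : 'I_n) : p.+3 < n -> (autL p La : nat) = p.+1.
Proof. by move=> lt /=; rewrite lt /= modn_small //; lia. Qed.

Lemma val_autL_a_eq n (p : 'I_n) : p.+3 = n -> (autL p La : nat) = n.-1.
Proof. by move=> eq /=; rewrite eq ltnn eqxx /= modn_small //; lia. Qed.

Lemma val_autL_a_gt n (p : 'I_n) : n < p.+3 -> (autL p La : nat) = 0.
Proof. by move=> gt /=; rewrite ltnNge ltnW // gtn_eqF //= mod0n. Qed.

Lemma cerny_shift m (q : 'I_m.+2) :
  (run (@cerny m.+2) q (rcons (nseq m.+1 Lb) La) : nat) = q.-1.
Proof.
rewrite run_rcons val_cerny_a (val_run_bmap (fun _ => erefl)).
case: q => [[|i] lt_i] /=; first by rewrite add0n modn_small // ltnn.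
by rewrite addSnnS modnDr modn_small ?lt_i // ltnW.
Qed.

Lemma autV_shift m (q : 'I_m.+2) :
  (run (@autV m.+2) q (rcons (nseq m Lb) La) : nat) = q.-1.
Proof.
rewrite run_rcons val_autV_a (val_run_bmap (fun _ => erefl)).
case: q => [[|[|i]] lt_i] /=.
- by rewrite add0n modn_small // ltnn.
- by rewrite add1n modn_small // ltnNge leqnSn.
- by rewrite !addSnnS modnDr modn_small ?lt_i //; lia.
Qed.

Lemma val_run_autL_a n (q : 'I_n) j :
  q + j + 3 <= n -> (run (@autL n) q (nseq j La) : nat) = q + j.
Proof.
elim: j q => [|j IH] q le_n; first by rewrite addn0.
by rewrite run_cons IH val_autL_a_lt ?addSnnS //; lia.
Qed.

(* a is the cycle 0 -> 1 -> ... -> n-3 -> n-1 -> 0 of length n - 1 (with n-2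
   sent into it), so a^(n-2) steps one place back along it. *)
Lemma autL_shift k (q : 'I_k.+3) :
  (run (@autL k.+3) q (nseq k.+1 La ++ [:: Lb; Lb]) : nat) = minn q.+1 k.+2.
Proof.
rewrite run_cat (val_run_bmap (fun _ => erefl) 2).
have [q0|[le_qk|lt_kq]] : q = 0 :> nat \/ 0 < q <= k \/ k < q by lia.
- have -> : nseq k.+1 La = rcons (nseq k La) La by rewrite -cats1 -addn1 nseqD.
  rewrite run_rcons val_autL_a_eq; last by rewrite val_run_autL_a; lia.
  by rewrite q0 /= addn2 -(addn1 k.+3) modnDl modn_small.
- have -> : nseq k.+1 La = nseq (k - q) La ++ La :: La :: nseq q.-1 La.
    by rewrite -[La :: _]/(nseq q.-1.+2 La) -nseqD; congr nseq; lia.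
  rewrite run_cat !run_cons.
  set p1 := run _ q _.
  have p1_k : p1 = k :> nat by rewrite val_run_autL_a; lia.
  have p2 : autL p1 La = k.+2 :> nat by rewrite val_autL_a_eq // p1_k.
  by rewrite val_run_autL_a val_autL_a_gt ?p2 ?modn_small; lia.
- rewrite -[nseq _ _]/(La :: nseq k La) run_cons.
  by rewrite val_run_autL_a val_autL_a_gt ?modn_small; lia.
Qed.

Theorem theorem1 (n : nat) :
  (2 <= n -> is_rc (syn (@cerny n)) n) /\
  (3 <= n -> is_rc (syn (@autL n)) n) /\
  (2 <= n -> is_rc (syn (@autV n)) n).
Proof.
split; [|split].
- by case: n => [|[|m]] // _; apply: is_rc_ord_pred (@cerny_shift m).
- by case: n => [|[|[|k]]] // _; apply: is_rc_ord_succ (@autL_shift k).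
- by case: n => [|[|m]] // _; apply: is_rc_ord_pred (@autV_shift m).
Qed.
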